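(* Let $u_1,\dots,u_n\in\mathbb{R}^d$, $c_1,\dots,c_m\in\mathbb{R}^n_{\ge0}$, budgets $b_1,\dots,b_m$, and $\varepsilon>0$ with $b_j\ge\frac{d\|c_j\|_\infty}{\varepsilon}$ for all $1\le j\le m$. Let $x\in[0,1]^n$ be an optimal solution of the convex program: maximize $\log\det(\sum_{i=1}^n x(i)u_iu_i^\top)$ subject to $\langle c_j,x\rangle\le b_j$ ($1\le j\le m$), $0\le x(i)\le1$ ($1\le i\le n$). Let $X=\sum_i x(i)u_iu_i^\top$ (nonsingular) and $v_i=X^{-1/2}u_i$. Then $\|v_i\|_2^2\le\varepsilon$ for each $i$ with $0<x(i)<1$. *)

From HB Require Import structures.
From mathcomp Require Import all_boot all_order all_algebra.
From mathcomp Require Import reals exp.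
Set Implicit Arguments. Unset Strict Implicit. Unset Printing Implicit Defensive.
Import Order.TTheory GRing.Theory Num.Theory.
Local Open Scope ring_scope.

Definition gram (R : realType) (n d : nat) (u : 'I_n -> 'cV[R]_d)
  (x : 'I_n -> R) : 'M[R]_d :=
  \sum_(i < n) x i *: (u i *m (u i)^T).

Definition feasible (R : realType) (n m : nat) (c : 'I_m -> 'I_n -> R)
  (b : 'I_m -> R) (x : 'I_n -> R) : Prop :=
  (forall j : 'I_m, \sum_(i < n) c j i * x i <= b j) /\
  (forall i : 'I_n, 0 <= x i <= 1).

Definition supnorm (R : realType) (n : nat) (v : 'I_n -> R) : R :=
  \big[Num.max/0]_(i < n) `|v i|.

Definition sqnorm2 (R : realType) (d : nat) (v : 'cV[R]_d) : R :=
  \sum_(k < d) v k 0 ^+ 2.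

(* x is an optimal solution of  max log det X(x)  s.t. feasible x,
   with X(x) nonsingular (log det finite). Feasible y with singular X(y)
   have log det = -oo and are never better. *)
Definition logdet_optimal (R : realType) (n m d : nat) (u : 'I_n -> 'cV[R]_d)
  (c : 'I_m -> 'I_n -> R) (b : 'I_m -> R) (x : 'I_n -> R) : Prop :=
  feasible c b x /\ 0 < \det (gram u x) /\
  forall y, feasible c b y -> 0 < \det (gram u y) ->
    ln (\det (gram u y)) <= ln (\det (gram u x)).

Definition is_inv_sqrt (R : realType) (d : nat) (X S : 'M[R]_d) : Prop :=
  S^T = S /\ (forall w : 'cV[R]_d, w != 0 -> 0 < (w^T *m S *m w) 0 0) /\
  S *m S = invmx X.

From HB Require Import structures.
From mathcomp Require Import all_boot all_order all_algebra.
From mathcomp Require Import reals exp.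
From mathcomp Require Import ring lra.
Set Implicit Arguments. Unset Strict Implicit. Unset Printing Implicit Defensive.
Import Order.TTheory GRing.Theory Num.Theory.
Local Open Scope ring_scope.

(* Suppose v_i^T v_i = u_i^T X^-1 u_i > eps at a fractional coordinate i, and
   move x a small step t towards the point (d / eps) e_i.  That point satisfies
   every budget constraint because b_j >= d |c_j|_oo / eps, so by convexity the
   new point stays feasible, and for t small enough it stays in the box because
   x(i) < 1.  By the matrix determinant lemma the determinant gets multiplied by
   (1 - t)^(d-1) (1 + t K) with K = d |v_i|^2 / eps - 1 > d - 1, which exceeds 1
   for small t by Bernoulli's inequality; this contradicts the optimality of x. *)

Lemma det1D_rank1 (R : comPzRingType) d (a b : 'cV[R]_d) :
  \det (1%:M + a *m b^T) = 1 + (b^T *m a) 0 0.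
Proof.
pose M := block_mx (1%:M : 'M[R]_d) a (- b^T) (1%:M : 'M[R]_1).
have M_lu : M = block_mx (1%:M + a *m b^T) a 0 1%:M *m block_mx 1%:M 0 (- b^T) 1%:M.
  rewrite mulmx_block !mulmx1 !mul0mx !mulmx0 !mul1mx ?add0r ?addr0.
  by rewrite mulmxN addrK.
have M_ul : M = block_mx 1%:M 0 (- b^T) 1%:M *m block_mx 1%:M a 0 (1%:M + b^T *m a).
  rewrite mulmx_block !mulmx1 !mul0mx !mulmx0 !mul1mx ?add0r ?addr0.
  by rewrite mulNmx addrCA addNr addr0.
have := congr1 determinant (etrans (esym M_lu) M_ul).
rewrite !det_mulmx !det_ublock !det_lblock !det1 !mul1r ?mulr1.
by rewrite det_mx11 !mxE /= mulr1n => ->.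
Qed.

Lemma det_scalarD_rank1 (F : fieldType) D (r : F) (a b : 'cV[F]_D.+1) :
  r != 0 -> \det (r%:M + a *m b^T) = r ^+ D * (r + (b^T *m a) 0 0).
Proof.
move=> r_neq0.
have -> : r%:M + a *m b^T = r *: (1%:M + (r^-1 *: a) *m b^T).
  by rewrite scalerDr scalemx1 -scalemxAl scalerA mulfV // scale1r.
by rewrite detZ det1D_rank1 -scalemxAr mxE exprS; field.
Qed.

Lemma bernoulli_ineq (R : realDomainType) (x : R) n :
  -1 <= x -> 1 + x *+ n <= (1 + x) ^+ n.
Proof.
move=> x_ge; elim: n => [|n IHn]; first by rewrite mulr0n addr0 expr0.
have x1_ge0 : 0 <= 1 + x by lra.
rewrite exprSr (le_trans _ (ler_wpM2r x1_ge0 IHn)) // mulrSr.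
have : 0 <= x *+ n * x by rewrite mulrnAl mulrn_wge0 // -expr2 sqr_ge0.
move: (x *+ n) => y; nra.
Qed.

Lemma one_lt_bernoulli_gain (R : realFieldType) D (K t : R) :
  D%:R < K -> 0 < t <= 1 -> t * (D%:R * K) < K - D%:R ->
  1 < (1 - t) ^+ D * (1 + t * K).
Proof.
move=> DK /andP[t_gt0 t_le1] small_t.
have bern : 1 - t *+ D <= (1 - t) ^+ D.
  by rewrite -mulNrn bernoulli_ineq // lerN2.
rewrite -mulr_natr in bern; move: ((1 - t) ^+ D) bern => P bern.
have tK_ge0 : 0 <= t * K by rewrite mulr_ge0 ?ltW // (le_lt_trans _ DK).
have := ler_wpM2r (ltW (ltr_wpDr tK_ge0 ltr01)) bern.
have : 0 < t * (K - D%:R - t * (D%:R * K)) by rewrite mulr_gt0 // subr_gt0.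
nra.
Qed.

Lemma exists_bernoulli_gain (R : realFieldType) D (K p : R) :
  D%:R < K -> 0 < p ->
  exists t : R, [/\ 0 < t, t <= p, t < 1 & 1 < (1 - t) ^+ D * (1 + t * K)].
Proof.
move=> DK p_gt0.
have D_ge0 : 0 <= D%:R :> R by [].
have den_gt0 : 0 < D%:R * K + K + 1 by nra.
pose q := (K - D%:R) / (D%:R * K + K + 1).
have q_gt0 : 0 < q by rewrite divr_gt0 // subr_gt0.
have qE : q * (D%:R * K + K + 1) = K - D%:R by rewrite mulfVK // lt0r_neq0.
have q_lt1 : q < 1 by rewrite ltr_pdivrMr // mul1r; nra.
pose t := Num.min p q.
have t_gt0 : 0 < t by rewrite lt_min p_gt0.
have t_le_q : t <= q by rewrite ge_min lexx orbT.
have t_lt1 : t < 1 := le_lt_trans t_le_q q_lt1.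
exists t; split; rewrite ?ge_min ?lexx //.
apply: one_lt_bernoulli_gain => //; first by rewrite t_gt0 ltW.
have DK_ge0 : 0 <= D%:R * K by nra.
have := ler_wpM2r DK_ge0 t_le_q; nra.
Qed.

Definition shift_toward (R : pzRingType) n (x : 'I_n -> R) (i : 'I_n) (s t : R)
  : 'I_n -> R :=
  fun k => (1 - t) * x k + t * s * (k == i)%:R.

Lemma sum_shift_towardZ (R : comPzRingType) (V : lmodType R) n (f : 'I_n -> V)
    (x : 'I_n -> R) (i : 'I_n) (s t : R) :
  \sum_(k < n) shift_toward x i s t k *: f k =
  (1 - t) *: \sum_(k < n) x k *: f k + (t * s) *: f i.
Proof.
under eq_bigr do rewrite scalerDl.
rewrite big_split /= scaler_sumr; congr (_ + _).
  by apply: eq_bigr => k _; rewrite scalerA.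
rewrite (bigD1 i) //= eqxx mulr1 big1 ?addr0 // => k /negbTE ->.
by rewrite mulr0 scale0r.
Qed.

Lemma gram_shift_toward (R : realType) n d (u : 'I_n -> 'cV[R]_d)
    (x : 'I_n -> R) (i : 'I_n) (s t : R) :
  gram u (shift_toward x i s t) = (1 - t) *: gram u x + (t * s) *: (u i *m (u i)^T).
Proof. exact: sum_shift_towardZ. Qed.

Lemma feasible_shift_toward (R : realType) n m (c : 'I_m -> 'I_n -> R)
    (b : 'I_m -> R) (x : 'I_n -> R) (i : 'I_n) (s t : R) :
  feasible c b x -> 0 <= t <= 1 -> 0 <= s -> t * s <= 1 - x i ->
  (forall j, c j i * s <= b j) -> feasible c b (shift_toward x i s t).
Proof.
move=> [budget box] /andP[t_ge0 t_le1] s_ge0 ts_le cs_le.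
have t1_ge0 : 0 <= 1 - t by rewrite subr_ge0.
split=> [j | k].
  rewrite (eq_bigr _ (fun k _ => mulrC (c j k) _)).
  have /= -> := sum_shift_towardZ (V := R^o) (c j) x i s t.
  rewrite (eq_bigr _ (fun k _ => mulrC (x k) (c j k))).
  have := ler_wpM2l t1_ge0 (budget j); have := ler_wpM2l t_ge0 (cs_le j).
  rewrite /GRing.scale /= mulrAC -mulrA; lra.
have ts_ge0 : 0 <= t * s by rewrite mulr_ge0.
rewrite /shift_toward; case: eqP => [->|_]; rewrite ?mulr1 ?mulr0 ?addr0.
  by have /andP[xi_ge0 _] := box i; apply/andP; split; nra.
by have /andP[xk_ge0 xk_le1] := box k; apply/andP; split; nra.
Qed.

Lemma det_gram_shift_toward (R : realType) n D (u : 'I_n -> 'cV[R]_D.+1)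
    (x : 'I_n -> R) (i : 'I_n) (s t : R) :
  gram u x \in unitmx -> t != 1 ->
  let w := ((u i)^T *m invmx (gram u x) *m u i) 0 0 in
  \det (gram u (shift_toward x i s t)) =
    \det (gram u x) * ((1 - t) ^+ D * (1 + t * (s * w - 1))).
Proof.
move=> X_unit t_neq1 w; set X := gram u x in w *.
have -> : gram u (shift_toward x i s t) =
    X *m ((1 - t)%:M + ((t * s) *: (invmx X *m u i)) *m (u i)^T).
  by rewrite gram_shift_toward mulmxDr mul_mx_scalar -scalemxAl -scalemxAr !mulmxA
    mulmxV // mul1mx.
rewrite det_mulmx det_scalarD_rank1 ?subr_eq0 1?eq_sym //.
rewrite -scalemxAr mxE mulmxA -/w; congr (_ * (_ * _)).
by rewrite -[t * s * w]mulrA mulrBr mulr1 addrCA addrC.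
Qed.

Lemma logdet_optimal_det_max (R : realType) n m d (u : 'I_n -> 'cV[R]_d)
    (c : 'I_m -> 'I_n -> R) (b : 'I_m -> R) (x y : 'I_n -> R) :
  logdet_optimal u c b x -> feasible c b y -> \det (gram u y) <= \det (gram u x).
Proof.
move=> [_ [detX_gt0 x_opt]] feas_y; rewrite leNgt; apply/negP => det_lt.
have detY_gt0 := lt_trans detX_gt0 det_lt.
have := x_opt _ feas_y detY_gt0.
by rewrite leNgt ltr_ln ?posrE // det_lt.
Qed.

Lemma sqnorm2_inv_sqrt (R : realType) d (X S : 'M[R]_d) (v : 'cV[R]_d) :
  is_inv_sqrt X S -> sqnorm2 (S *m v) = (v^T *m invmx X *m v) 0 0.
Proof.
move=> [S_sym [_ SS]].
have -> : v^T *m invmx X *m v = (S *m v)^T *m (S *m v).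
  by rewrite -SS trmx_mul S_sym !mulmxA.
by rewrite /sqnorm2 mxE; apply: eq_bigr => k _; rewrite !mxE expr2.
Qed.

Lemma coord_le_supnorm (R : realType) n (v : 'I_n -> R) (i : 'I_n) :
  v i <= supnorm v.
Proof. by apply: le_trans (ler_norm _) _; rewrite /supnorm; apply: le_bigmax. Qed.

Theorem lemma4p12 (R : realType) (n m d : nat) (u : 'I_n -> 'cV[R]_d)
  (c : 'I_m -> 'I_n -> R) (b : 'I_m -> R) (eps : R) (x : 'I_n -> R)
  (S : 'M[R]_d) :
  0 < eps ->
  (forall j i, 0 <= c j i) ->
  (forall j, d%:R * supnorm (c j) / eps <= b j) ->
  logdet_optimal u c b x ->
  is_inv_sqrt (gram u x) S ->
  forall i : 'I_n, 0 < x i < 1 -> sqnorm2 (S *m u i) <= eps.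
Proof.
move=> eps_gt0 _ budget_large x_opt invsqrt i /andP[xi_gt0 xi_lt1].
have [feas_x [detX_gt0 _]] := x_opt.
case: d u S budget_large x_opt invsqrt detX_gt0 => [|D] u S budget_large x_opt invsqrt detX_gt0.
  by rewrite /sqnorm2 big_ord0 ltW.
rewrite (sqnorm2_inv_sqrt _ invsqrt); set w := (_ *m _ *m _) 0 0.
rewrite leNgt; apply/negP => w_gt_eps.
pose a := D.+1%:R / eps.
have a_gt0 : 0 < a by rewrite divr_gt0.
have DK : D%:R < a * w - 1.
  have : D.+1%:R < a * w.
    by rewrite /a mulrAC -mulrA ltr_pMr ?ltr0n // ltr_pdivlMr // mul1r.
  by rewrite -natr1; lra.
have room_gt0 : 0 < (1 - x i) / a by rewrite divr_gt0 // subr_gt0.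
have [t [t_gt0 t_le t_lt1 gain]] := exists_bernoulli_gain DK room_gt0.
have feas_y : feasible c b (shift_toward x i a t).
  apply: feasible_shift_toward => // [|||j].
  - by rewrite !ltW.
  - exact: ltW.
  - by rewrite -ler_pdivlMr.
  - apply: le_trans (budget_large j).
    by rewrite mulrAC -/a mulrC ler_pM2l ?coord_le_supnorm.
have X_unit : gram u x \in unitmx by rewrite unitmxE unitfE lt0r_neq0.
have := logdet_optimal_det_max x_opt feas_y.
by rewrite det_gram_shift_toward ?(lt_eqF t_lt1) // -/w leNgt ltr_pMr // gain.
Qed.
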